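(* Let $(I_n)_{n\ge1}$ be pairwise disjoint intervals in $\mathcal{R}$ with $\lim_{n\to\infty}l(I_n)=0$, and let $A,B\subseteq\mathcal{R}$ be outer measurable with $A\subseteq\bigcup_{n=1}^\infty I_n$ and $B\subseteq\mathcal{R}\setminus\bigcup_{n=1}^\infty I_n$. Then $A\cup B$ is outer measurable and $M_u(A\cup B)=M_u(A)+M_u(B)$.
   Context: $\mathcal{R}$ denotes the Levi-Civita field: functions $x:\mathbb{Q}\to\mathbb{R}$ with left-finite support, with componentwise addition and formal power series multiplication, ordered by $x>0$ iff $x\ne0$ and $x[\min\operatorname{supp}x]>0$; it is a non-Archimedean ordered field extension of $\mathbb{R}$, Cauchy complete in the order topology, in which all limits and series are taken (a series $\sum a_n$ converges iff $a_n\to0$). An interval is a set $[a,b],[a,b),(a,b]$ or $(a,b)$ with $a<b$ in $\mathcal{R}$, of length $l=b-a$. A cover of $A\subseteq\mathcal{R}$ is a sequence of intervals $(S_n)_{n\ge1}$ with $A\subseteq\bigcup_n S_n$ and $\sum_n l(S_n)$ convergent in $\mathcal{R}$. $A$ is called outer measurable if the infimum $\inf\{\sum_n l(S_n): (S_n)\text{ a cover of }A\}$ exists in $\mathcal{R}$; this infimum is then called the outer measure $M_u(A)$. *)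

(* the Levi-Civita field over an arbitrary realType R
   (any realType is a model of the real numbers). *)
From HB Require Import structures.
From mathcomp Require Import all_boot all_order all_algebra.
From mathcomp Require Import boolp classical_sets functions cardinality reals.
Set Implicit Arguments. Unset Strict Implicit. Unset Printing Implicit Defensive.
Import Order.TTheory GRing.Theory Num.Theory.
Local Open Scope ring_scope.
Local Open Scope classical_set_scope.

Section LeviCivita.
Variable R : realType.

Definition LCf := rat -> R.

Definition LC : set LCf :=
  [set x | forall q : rat, finite_set [set p : rat | p < q /\ x p != 0]].

Definition LCzero : LCf := fun _ => 0.
Definition LCadd (x y : LCf) : LCf := fun q => x q + y q.
Definition LCopp (x : LCf) : LCf := fun q => - x q.
Definition LCsub (x y : LCf) : LCf := fun q => x q - y q.

(* x > 0 iff x <> 0 and x[min supp x] > 0 : q is the minimum of the support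
   and the coefficient there is positive *)
Definition LCpos (x : LCf) : Prop :=
  exists q : rat, 0 < x q /\ forall p : rat, p < q -> x p = 0.

Definition LClt (x y : LCf) : Prop := LCpos (LCsub y x).
Definition LCle (x y : LCf) : Prop := x = y \/ LClt x y.

Definition LCconv (s : nat -> LCf) (L : LCf) : Prop :=
  L \in LC /\
  forall lo hi : LCf, lo \in LC -> hi \in LC -> LClt lo L -> LClt L hi ->
    exists N : nat, forall n : nat, (N <= n)%N -> LClt lo (s n) /\ LClt (s n) hi.

Definition LCpsum (a : nat -> LCf) (n : nat) : LCf := fun q => \sum_(i < n) a i q.
Definition LCseries_conv (a : nat -> LCf) (L : LCf) : Prop := LCconv (LCpsum a) L.

(* intervals: endpoints a < b, and flags telling whether each end is closed *)
Record lc_interval := Itv { ilo : LCf; ihi : LCf; iloc : bool; ihic : bool }.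

Definition itv_valid (I : lc_interval) : Prop :=
  ilo I \in LC /\ ihi I \in LC /\ LClt (ilo I) (ihi I).

Definition itv_set (I : lc_interval) : set LCf :=
  [set x | x \in LC /\
    (if iloc I then LCle (ilo I) x else LClt (ilo I) x) /\
    (if ihic I then LCle x (ihi I) else LClt x (ihi I))].

Definition itv_len (I : lc_interval) : LCf := LCsub (ihi I) (ilo I).

Definition is_cover (A : set LCf) (S : nat -> lc_interval) (L : LCf) : Prop :=
  (forall n, itv_valid (S n)) /\
  A `<=` \bigcup_n itv_set (S n) /\
  LCseries_conv (fun n => itv_len (S n)) L.

Definition cover_sums (A : set LCf) : set LCf :=
  [set L | exists S, is_cover A S L].

Definition is_outer_measure (A : set LCf) (m : LCf) : Prop :=
  m \in LC /\
  (forall L, cover_sums A L -> LCle m L) /\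
  (forall m', m' \in LC -> (forall L, cover_sums A L -> LCle m' L) -> LCle m' m).

Definition outer_measurable (A : set LCf) : Prop :=
  exists m, is_outer_measure A m.

End LeviCivita.

(* Convergence in the order topology of the Levi-Civita field is eventual
   coefficientwise stationarity: s_n -> L iff for every exponent q, s_n and L
   have the same coefficients below q for all large n.  Hence x <= y follows as
   soon as x <= y + e for errors e that vanish below an arbitrary q, and such
   q-negligible errors (the monomial d^q, finite sums of them, tails of
   convergent series) can be spent freely, e.g. to replace a degenerate piece
   of an interval by a genuine interval of length d^q.

   Given a cover (S_k) of A u B with total length L and an exponent q, choose K
   such that the tail of the series of l(S_k) from K on is q-negligible, and N
   such that the tail of the series of l(I_n) from N on is q-negligible (it
   converges because l(I_n) -> 0).  Cutting S_0, ..., S_(K-1) along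
   I_0, ..., I_(N-1) gives one finite family of intervals covering the points
   of these S_k lying in some I_n, and another covering those lying in none,
   of total length l(S_0) + ... + l(S_(K-1)) up to a q-negligible error.  The
   first family with the tails (S_k)_(k>=K) and (I_n)_(n>=N) covers A, the
   second with (S_k)_(k>=K) covers B; so M_u(A) + M_u(B) <= L up to a
   q-negligible error, for every q.  The reverse inequality comes from
   interleaving nearly optimal covers of A and of B. *)

From HB Require Import structures.
From mathcomp Require Import all_boot all_order all_algebra.
From mathcomp Require Import boolp classical_sets functions cardinality reals.
From mathcomp Require Import ring.
Set Implicit Arguments. Unset Strict Implicit. Unset Printing Implicit Defensive.
Import Order.TTheory GRing.Theory Num.Theory.
Local Open Scope ring_scope.
Local Open Scope classical_set_scope.

(* Classical decidable equality, so that lists of intervals support [\in]. *)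
HB.instance Definition _ (R : realType) := gen_eqMixin (lc_interval R).

Lemma seq_min d (T : orderType d) (s : seq T) : s != [::] ->
  exists2 r, r \in s & {in s, forall p, (r <= p)%O}.
Proof.
elim: s => [//|a [|b s] IH] _.
  by exists a; rewrite ?mem_head // => p; rewrite inE => /eqP ->.
have [r rs rmin] := IH isT.
exists (Order.min a r).
  by rewrite minEle; case: ifP; rewrite ?mem_head // inE rs orbT.
by move=> p; rewrite inE ge_min => /predU1P [->|/rmin ->]; rewrite ?lexx ?orbT.
Qed.

Section LeviCivita.
Variable R : realType.
Notation F := (LCf R).
Notation LC := (@LC R).
Implicit Types (x y z w e L : F) (p q r : rat) (a b : nat -> F).

(** * Support and order *)

Lemma LCD x y : LC x -> LC y -> LC (x + y).
Proof.
move=> Hx Hy q.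
have : finite_set ([set p | p < q /\ x p != 0] `|` [set p | p < q /\ y p != 0]).
  by rewrite finite_setU.
apply: sub_finite_set => p /= [pq]; rewrite addrfctE.
have [x0|] := eqVneq (x p) 0; last by left.
by rewrite x0 add0r; right.
Qed.

Lemma LCN x : LC x -> LC (- x).
Proof.
by move=> Hx q; apply: sub_finite_set (Hx q) => p [pq]; rewrite opprfctE oppr_eq0.
Qed.

Lemma LCB x y : LC x -> LC y -> LC (x - y).
Proof. by move=> Hx Hy; apply: LCD (LCN Hy). Qed.

Lemma LC0 : LC 0.
Proof. by move=> q; apply: sub_finite_set (finite_set0 _) => p [_ /eqP]. Qed.

Lemma LC_sum (I : Type) (s : seq I) (f : I -> F) :
  (forall i, LC (f i)) -> LC (\sum_(i <- s) f i).
Proof.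
move=> Hf; elim: s => [|i s IH]; first by rewrite big_nil; apply: LC0.
by rewrite big_cons; apply: LCD.
Qed.

Definition monomial q : F := fun p => if p == q then 1 else 0.

Lemma LC_monomial q : LC (monomial q).
Proof.
move=> r; apply: sub_finite_set (finite_set1 q) => p [_].
by rewrite /monomial; case: (p =P q) => // _; rewrite eqxx.
Qed.

Lemma monomial_lt q p : p < q -> monomial q p = 0.
Proof. by move=> pq; rewrite /monomial lt_eqF. Qed.

Lemma LCposD x y : LCpos x -> LCpos y -> LCpos (x + y).
Proof.
move=> [qx [xq x0]] [qy [yq y0]]; rewrite /LCpos addrfctE.
exists (Num.min qx qy); split; last first.
  by move=> p; rewrite lt_min => /andP [/x0 -> /y0 ->]; rewrite addr0.
case: (ltgtP qx qy) => [lt|lt|eq].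
- by rewrite y0 ?addr0.
- by rewrite x0 ?add0r.
- by subst qy; rewrite addr_gt0.
Qed.

Lemma not_LCpos0 : ~ LCpos (0 : F).
Proof. by move=> [q []]; rewrite ltxx. Qed.

Lemma LCpos_monomial q : LCpos (monomial q).
Proof.
exists q; split; first by rewrite /monomial eqxx ltr01.
exact: monomial_lt.
Qed.

Lemma LC_lead x p0 : LC x -> x p0 != 0 ->
  exists q, x q != 0 /\ forall p, p < q -> x p = 0.
Proof.
move=> Hx x0; have /finite_seqP [s Hs] := Hx (p0 + 1).
have sP p : (p < p0 + 1 /\ x p != 0) = (p \in s : Prop).
  exact: (congr1 (fun A : set rat => A p) Hs).
have p0s : p0 \in s by rewrite -sP ltrDl ltr01.
have [r rs rmin] : exists2 r, r \in s & {in s, forall p, r <= p}.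
  by apply: seq_min; case: s p0s {Hs sP}.
move: rs; rewrite -sP => -[r_lt xr]; exists r; split => // p pr.
apply/eqP; apply: contraT => xp.
have /rmin : p \in s by rewrite -sP; split => //; apply: lt_trans r_lt.
by rewrite leNgt pr.
Qed.

Lemma LC_trichotomy x : LC x -> [\/ x = 0, LCpos x | LCpos (- x)].
Proof.
move=> Hx; have [x0|/existsNP [p0 /eqP xp0]] := pselect (forall p, x p = 0).
  by apply: Or31; apply/funext.
have [r [xr xz]] := LC_lead Hx xp0.
have [xr_lt|xr_gt] := ltP (x r) 0.
  apply: Or33; exists r; rewrite opprfctE oppr_gt0; split => // p /xz ->.
  by rewrite oppr0.
by apply: Or32; exists r; split; first by rewrite lt_neqAle eq_sym xr.
Qed.

Lemma LCltE x y : LClt x y = LCpos (y - x).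
Proof. by []. Qed.

Lemma LClt_trans y x z : LClt x y -> LClt y z -> LClt x z.
Proof.
rewrite !LCltE => xy yz; have -> : z - x = (z - y) + (y - x) by ring.
exact: LCposD.
Qed.

Lemma LClt_irrefl x : ~ LClt x x.
Proof. by rewrite LCltE subrr; apply: not_LCpos0. Qed.

Lemma LCle_refl x : LCle x x.
Proof. by left. Qed.

Lemma LCle_trans y x z : LCle x y -> LCle y z -> LCle x z.
Proof.
move=> [<-|xy] [<-|yz]; [by left|by right|by right|].
by right; apply: LClt_trans yz.
Qed.

Lemma LClt_geF x y : LClt x y -> ~ LCle y x.
Proof.
move=> xy [yx|yx]; first by subst; apply: LClt_irrefl xy.
exact: LClt_irrefl (LClt_trans xy yx).
Qed.

Lemma LClt_total x y : LC x -> LC y -> [\/ x = y, LClt x y | LClt y x].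
Proof.
move=> Hx Hy; have [/eqP|xy|yx] := LC_trichotomy (LCB Hy Hx).
- by rewrite subr_eq0 => /eqP ->; apply: Or31.
- exact: Or32.
- by apply: Or33; rewrite LCltE -opprB.
Qed.

Lemma LCle_gt x y : LC x -> LC y -> LCle x y \/ LClt y x.
Proof.
by move=> Hx Hy; case: (LClt_total Hx Hy) => [->|xy|yx]; [left; left|left; right|right].
Qed.

Lemma LCle_anti x y : LCle x y -> LCle y x -> x = y.
Proof. by move=> [//|xy] /(LClt_geF xy). Qed.

Lemma LCleD x y z w : LCle x y -> LCle z w -> LCle (x + z) (y + w).
Proof.
move=> [<-|xy] [<-|zw]; [by left|right; rewrite LCltE..].
- by have -> : x + w - (x + z) = w - z by ring.
- by have -> : y + z - (x + z) = y - x by ring.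
- have -> : y + w - (x + z) = (y - x) + (w - z) by ring.
  exact: LCposD.
Qed.

(** * Convergence *)

Definition agree_below q x y := forall p, p < q -> x p = y p.

Definition negligible q e := LC e /\ agree_below q e 0.

Lemma negligible0 q : negligible q 0.
Proof. by split; [apply: LC0|]. Qed.

Lemma negligibleD q e e' :
  negligible q e -> negligible q e' -> negligible q (e + e').
Proof.
move=> [He e0] [He' e'0]; split; first exact: LCD.
by move=> p pq; rewrite addrfctE /= e0 // e'0 // addr0.
Qed.

Lemma negligible_monomial q : negligible q (monomial q).
Proof. by split; [apply: LC_monomial | apply: monomial_lt]. Qed.

Lemma LCpos_agree x : LCpos x -> exists q, forall y, agree_below q y x -> LCpos y.
Proof.
move=> [r [xr xz]]; exists (r + 1) => y yx.
have r_lt : r < r + 1 by rewrite ltrDl ltr01.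
exists r; rewrite yx //; split => // p pr.
by rewrite yx ?xz //; apply: lt_trans r_lt.
Qed.

Lemma agree_monomial_bound q e :
  LClt (- monomial q) e -> LClt e (monomial q) -> agree_below q e 0.
Proof.
rewrite !LCltE opprK => -[q1 [pos1 z1]] [q2 [pos2 z2]].
have eq1 p : p < q -> e p = (e + monomial q) p.
  by move=> pq; rewrite addrfctE monomial_lt // addr0.
have eq2 p : p < q -> - e p = (monomial q - e) p.
  by move=> pq; rewrite addrfctE monomial_lt // add0r.
suff q_le : q <= q1 by move=> p pq; rewrite eq1 // z1 //; apply: lt_le_trans q_le.
rewrite leNgt; apply/negP => q1q; have e1 : 0 < e q1 by rewrite eq1.
case: (ltgtP q1 q2) => [/z2|lt21|eq12].
- by rewrite -eq2 // => /eqP; rewrite oppr_eq0 (gt_eqF e1).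
- have q2q := lt_trans lt21 q1q.
  by move: pos2; rewrite -eq2 // eq1 // z1 // oppr0 ltxx.
- by move: pos2; rewrite -eq12 -eq2 // oppr_gt0 => /(lt_trans e1); rewrite ltxx.
Qed.

Lemma LCle_approx x y : LC x -> LC y ->
  (forall q, exists2 e, negligible q e & LCle x (y + e)) -> LCle x y.
Proof.
move=> Hx Hy approx.
have [//|/LCpos_agree [q agree]] := LCle_gt Hx Hy; exfalso.
have [e [_ e0] xye] := approx q; apply: LClt_geF xye; rewrite LCltE.
by apply: agree => p pq; rewrite !fctE /= e0 //= addr0.
Qed.

Definition coef_conv (s : nat -> F) L :=
  LC L /\ forall q, exists N, forall n, (N <= n)%N -> agree_below q (s n) L.

Lemma LCconvP s L : LCconv s L <-> coef_conv s L.
Proof.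
split=> [[/[!inE] HL conv]|[HL conv]].
  split=> // q; have Hd := LC_monomial q.
  have lo : LClt (L - monomial q) L.
    by rewrite LCltE opprB addrC subrK; apply: LCpos_monomial.
  have hi : LClt L (L + monomial q).
    by rewrite LCltE addrC addKr; apply: LCpos_monomial.
  have [N HN] := conv _ _ (mem_set (LCB HL Hd)) (mem_set (LCD HL Hd)) lo hi.
  exists N => n /HN [lo_s s_hi] p pq.
  have := agree_monomial_bound (e := s n - L) _ _ pq; rewrite !LCltE.
  have -> : s n - L - - monomial q = s n - (L - monomial q) by ring.
  have -> : monomial q - (s n - L) = L + monomial q - s n by ring.
  by move=> /(_ lo_s s_hi); rewrite !fctE /= => /eqP; rewrite subr_eq0 => /eqP.
split=> [|lo hi _ _ /LCpos_agree [q1 lo1] /LCpos_agree [q2 hi2]].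
  exact: mem_set.
have [N HN] := conv (Num.max q1 q2); exists N => n /HN agree.
have agree1 : agree_below q1 (s n) L.
  by move=> p pq; apply: agree; rewrite lt_max pq.
have agree2 : agree_below q2 (s n) L.
  by move=> p pq; apply: agree; rewrite lt_max pq orbT.
by split; [apply: lo1 => p /agree1 | apply: hi2 => p /agree2]; rewrite /LCsub => ->.
Qed.

(** * Series *)

Lemma LCpsumE a n : LCpsum a n = \sum_(i < n) a i.
Proof. by rewrite fct_sumE. Qed.

Lemma LC_psum a : (forall n, LC (a n)) -> forall n, LC (LCpsum a n).
Proof. by move=> Ha n; rewrite LCpsumE; apply: LC_sum. Qed.

Lemma LCpsumS a n : LCpsum a n.+1 = LCpsum a n + a n.
Proof. by rewrite !LCpsumE big_ord_recr. Qed.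

Lemma LCpsum_recl a n : LCpsum a n.+1 = a 0%N + LCpsum (fun n => a n.+1) n.
Proof. by rewrite !LCpsumE big_ord_recl. Qed.

Lemma coef_conv_psum_recl a L : LC (a 0%N) ->
  coef_conv (LCpsum (fun n => a n.+1)) L -> coef_conv (LCpsum a) (a 0%N + L).
Proof.
move=> Ha0 [HL conv]; split=> [|q]; first exact: LCD.
have [N HN] := conv q; exists N.+1 => -[//|n] /HN agree p pq.
by rewrite LCpsum_recl !fctE /= agree.
Qed.

Definition interleave (T : Type) (a b : nat -> T) n :=
  if odd n then b n./2 else a n./2.

Lemma LCpsum_interleave a b n :
  LCpsum (interleave a b) n = LCpsum a (uphalf n) + LCpsum b n./2.
Proof.
rewrite !LCpsumE; elim: n => [|n IH]; first by rewrite !big_ord0 addr0.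
rewrite big_ord_recr IH /interleave /= uphalf_half; case: odd => /=.
  by rewrite add1n [\sum_(i < n./2.+1) b i]big_ord_recr addrA.
by rewrite add0n big_ord_recr /= addrAC.
Qed.

Lemma coef_conv_interleave a b La Lb :
  coef_conv (LCpsum a) La -> coef_conv (LCpsum b) Lb ->
  coef_conv (LCpsum (interleave a b)) (La + Lb).
Proof.
move=> [HLa conva] [HLb convb]; split=> [|q]; first exact: LCD.
have [Na HNa] := conva q; have [Nb HNb] := convb q.
exists (maxn Na Nb).*2 => n Nn p pq.
have Nn2 : (maxn Na Nb <= n./2)%N by rewrite -(doubleK (maxn Na Nb)) half_leq.
have Nn2' : (maxn Na Nb <= uphalf n)%N.
  by apply: leq_trans Nn2 _; rewrite uphalf_half leq_addl.
rewrite LCpsum_interleave !fctE /= HNa ?HNb //.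
- by apply: leq_trans Nn2; rewrite leq_maxr.
- by apply: leq_trans Nn2'; rewrite leq_maxl.
Qed.

Lemma coef_conv_psum_shift a L K :
  (forall n, LC (a n)) -> coef_conv (LCpsum a) L ->
  coef_conv (LCpsum (fun n => a (K + n)%N)) (L - LCpsum a K).
Proof.
move=> Ha [HL conv]; split=> [|q]; first by apply: LCB => //; apply: LC_psum.
have [N HN] := conv q; exists N => n Nn p pq.
have -> : LCpsum (fun n => a (K + n)%N) n = LCpsum a (K + n) - LCpsum a K.
  by rewrite !LCpsumE big_split_ord /= addrAC subrr add0r.
by rewrite !fctE /= HN // (leq_trans Nn) ?leq_addl.
Qed.

Lemma LCpsum_stable a p M n :
  (forall i, (M <= i)%N -> a i p = 0) -> (M <= n)%N -> LCpsum a n p = LCpsum a M p.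
Proof.
move=> a0 /subnK <-; elim: (n - M)%N => [|k IH]; first by rewrite add0n.
by rewrite addSn LCpsumS addrfctE /= IH a0 ?addr0 ?leq_addl.
Qed.

Lemma coef_conv_series a : (forall n, LC (a n)) -> coef_conv a 0 ->
  exists L, coef_conv (LCpsum a) L.
Proof.
move=> Ha [_ /choice [N HN]].
(* The coefficient at p of the partial sums is constant from N (p + 1) on. *)
pose L : F := fun p => LCpsum a (N (p + 1)) p.
have stable q n p : (N q <= n)%N -> p < q -> LCpsum a n p = L p.
  move=> nq pq; have a0 i : (minn (N q) (N (p + 1)%R) <= i)%N -> a i p = 0.
    by rewrite geq_min => /orP [/HN/(_ p pq) | /HN/(_ p)] -> //; rewrite ltrDl ltr01.
  rewrite (LCpsum_stable a0) ?geq_min ?nq // /L (LCpsum_stable a0) //.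
  by rewrite geq_min leqnn orbT.
exists L; split=> [r|q]; last by exists (N q) => n nq p pq; apply: stable nq pq.
apply: sub_finite_set (LC_psum Ha (N r) r) => p /= [pr Lp]; split => //.
by rewrite (stable r (N r) p).
Qed.

(** * Cutting intervals *)

Notation itv := (lc_interval R).
Implicit Types (S J : itv) (Ss Js As Bs : seq itv).

Lemma itv_valid_LC S :
  itv_valid S -> [/\ LC (ilo S), LC (ihi S) & LClt (ilo S) (ihi S)].
Proof. by move=> [lo [hi lohi]]; rewrite !inE in lo hi. Qed.

Lemma itv_lenE S : itv_len S = ihi S - ilo S.
Proof. by []. Qed.

Lemma LC_itv_len S : itv_valid S -> LC (itv_len S).
Proof. by case/itv_valid_LC => lo hi _; apply: LCB. Qed.

Lemma itv_set_bounds S x :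
  itv_set S x -> [/\ LC x, LCle (ilo S) x & LCle x (ihi S)].
Proof. by case: S => lo hi [] [] /= [/[!inE] Hx [lox xhi]]; split => //; right. Qed.

Lemma itv_set_inner S x : LC x -> LClt (ilo S) x -> LClt x (ihi S) -> itv_set S x.
Proof.
by case: S => lo hi [] [] /= Hx lox xhi; split; rewrite ?inE //; split; by [right|].
Qed.

Definition closed_itv x y : itv := Itv x y true true.

Lemma closed_itv_valid x y : LC x -> LC y -> LClt x y -> itv_valid (closed_itv x y).
Proof. by split; rewrite ?inE. Qed.

Lemma mem_closed_itv x y z :
  LC z -> LCle x z -> LCle z y -> itv_set (closed_itv x y) z.
Proof. by split; rewrite ?inE. Qed.

Lemma LClt_monomial x q : LClt x (x + monomial q).
Proof. by rewrite LCltE addrC addKr; apply: LCpos_monomial. Qed.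

Lemma itv_cut q S c : itv_valid S -> LC c -> exists S1 S2,
  [/\ itv_valid S1, itv_valid S2,
      itv_set S `&` [set x | LCle x c] `<=` itv_set S1,
      itv_set S `&` [set x | LCle c x] `<=` itv_set S2 &
      exists2 e, negligible q e & itv_len S1 + itv_len S2 = itv_len S + e].
Proof.
case: S => lo hi lc hc /itv_valid_LC [/= Hlo Hhi lohi] Hc.
have Hd := LC_monomial q; have nd := negligible_monomial q.
(* When c lies outside (lo, hi), one of the two pieces is degenerate and is
   replaced by an interval of length d^q. *)
have [clo|loc] := LCle_gt Hc Hlo.
  exists (closed_itv lo (lo + monomial q)), (closed_itv lo hi); split.
  - exact: closed_itv_valid (LCD Hlo Hd) (LClt_monomial _ _).
  - exact: closed_itv_valid.
  - move=> x [/itv_set_bounds [Hx lox _] xc].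
    have <- : lo = x by apply: LCle_anti lox (LCle_trans xc clo).
    exact: mem_closed_itv (LCle_refl _) (or_intror (LClt_monomial _ _)).
  - by move=> x [/itv_set_bounds [Hx lox xhi] _]; apply: mem_closed_itv.
  - by exists (monomial q) => //; rewrite !itv_lenE /=; ring.
have [hic|chi] := LCle_gt Hhi Hc; last first.
  exists (closed_itv lo c), (closed_itv c hi); split.
  - exact: closed_itv_valid.
  - exact: closed_itv_valid.
  - by move=> x [/itv_set_bounds [Hx lox _] xc]; apply: mem_closed_itv.
  - by move=> x [/itv_set_bounds [Hx _ xhi] cx]; apply: mem_closed_itv.
  - by exists 0; [apply: negligible0 | rewrite !itv_lenE /=; ring].
exists (closed_itv lo hi), (closed_itv hi (hi + monomial q)); split.
- exact: closed_itv_valid.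
- exact: closed_itv_valid (LCD Hhi Hd) (LClt_monomial _ _).
- by move=> x [/itv_set_bounds [Hx lox xhi] _]; apply: mem_closed_itv.
- move=> x [/itv_set_bounds [Hx _ xhi] cx].
  have -> : x = hi by apply: LCle_anti xhi (LCle_trans hic cx).
  exact: mem_closed_itv (LCle_refl _) (or_intror (LClt_monomial _ _)).
- by exists (monomial q) => //; rewrite !itv_lenE /=; ring.
Qed.

Definition itvs_valid Ss := {in Ss, forall S, itv_valid S}.
Definition itvs_set Ss : set F := [set x | exists2 S, S \in Ss & itv_set S x].
Definition itvs_len Ss : F := \sum_(S <- Ss) itv_len S.

Lemma itvs_valid_cat Ss Ss' :
  itvs_valid Ss -> itvs_valid Ss' -> itvs_valid (Ss ++ Ss').
Proof. by move=> v v' S; rewrite mem_cat => /orP [/v|/v']. Qed.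

Lemma itvs_valid_cons S Ss : itvs_valid (S :: Ss) -> itv_valid S /\ itvs_valid Ss.
Proof. by move=> v; split=> [|S' SSs]; apply: v; rewrite inE ?eqxx ?SSs ?orbT. Qed.

Lemma itvs_set_cat Ss Ss' : itvs_set (Ss ++ Ss') = itvs_set Ss `|` itvs_set Ss'.
Proof.
apply/seteqP; split=> [x [S]|x [] [S SS xS]]; last 2 first.
- by exists S; rewrite // mem_cat SS.
- by exists S; rewrite // mem_cat SS orbT.
by rewrite mem_cat => /orP [] SS xS; [left|right]; exists S.
Qed.

Lemma itvs_set_cons S Ss : itvs_set (S :: Ss) = itv_set S `|` itvs_set Ss.
Proof.
rewrite -cat1s itvs_set_cat; congr (_ `|` _); apply/seteqP.
by split=> [x [S']|x xS]; [rewrite inE => /eqP -> | exists S; rewrite ?mem_head].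
Qed.

Lemma itvs_set0 : itvs_set [::] = set0.
Proof. by apply/seteqP; split=> x // [S]. Qed.

Lemma itvs_len_cat Ss Ss' : itvs_len (Ss ++ Ss') = itvs_len Ss + itvs_len Ss'.
Proof. exact: big_cat. Qed.

Definition splitting q (T : set F) Ss As Bs :=
  [/\ itvs_valid As, itvs_valid Bs,
      itvs_set Ss `&` T `<=` itvs_set As,
      itvs_set Ss `\` T `<=` itvs_set Bs &
      exists2 e, negligible q e & itvs_len As + itvs_len Bs = itvs_len Ss + e].

Lemma splitting_itv q S J : itv_valid S -> itv_valid J ->
  exists As Bs, splitting q (itv_set J) [:: S] As Bs.
Proof.
move=> vS /[dup] vJ /itv_valid_LC [Hlo Hhi _].
have [S1 [R1 [v1 vR1 cut1 cutR1 [e1 ne1 len1]]]] := itv_cut q vS Hlo.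
have [S2 [S3 [v2 v3 cut2 cut3 [e2 ne2 len2]]]] := itv_cut q vR1 Hhi.
exists [:: S2], [:: S1; S3]; split.
- by move=> S'; rewrite inE => /eqP ->.
- by move=> S'; rewrite !inE => /orP [] /eqP ->.
- rewrite itvs_set_cons itvs_set0 setU0 itvs_set_cons itvs_set0 setU0.
  move=> x [xS /itv_set_bounds [Hx lox xhi]]; apply: cut2; split => //.
  exact: cutR1.
- rewrite itvs_set_cons itvs_set0 setU0 itvs_set_cons itvs_set_cons itvs_set0 setU0.
  move=> x [xS xJ]; have [Hx _ _] := itv_set_bounds xS.
  have [xlo|lox] := LCle_gt Hx Hlo.
    by left; apply: cut1.
  have [hix|xhi] := LCle_gt Hhi Hx; last first.
    by case: xJ; apply: itv_set_inner.
  by right; apply: cut3; split => //; apply: cutR1; split => //; right.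
- exists (e1 + e2); first exact: negligibleD.
  rewrite /itvs_len !big_cons !big_nil.
  have -> : itv_len S = itv_len S1 + itv_len R1 - e1 by rewrite len1 addrK.
  have -> : itv_len R1 = itv_len S2 + itv_len S3 - e2 by rewrite len2 addrK.
  ring.
Qed.

Lemma splitting_cat q T Ss Ss' As As' Bs Bs' :
  splitting q T Ss As Bs -> splitting q T Ss' As' Bs' ->
  splitting q T (Ss ++ Ss') (As ++ As') (Bs ++ Bs').
Proof.
move=> [vA vB cA cB [e ne len]] [vA' vB' cA' cB' [e' ne' len']].
split; try exact: itvs_valid_cat.
- by rewrite !itvs_set_cat setIUl; apply: setUSS.
- by rewrite !itvs_set_cat setDUl; apply: setUSS.
- exists (e + e'); first exact: negligibleD.
  by rewrite !itvs_len_cat addrACA len len'; ring.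
Qed.

Lemma splitting_by_itv q J Ss : itv_valid J -> itvs_valid Ss ->
  exists As Bs, splitting q (itv_set J) Ss As Bs.
Proof.
move=> vJ; elim: Ss => [_|S Ss IH /itvs_valid_cons [vS vSs]].
  exists [::], [::]; split=> //; rewrite ?itvs_set0 ?set0I ?set0D //.
  by exists 0; [apply: negligible0 | rewrite /itvs_len !big_nil; ring].
have [As [Bs sS]] := splitting_itv q vS vJ.
have [As' [Bs' sSs]] := IH vSs.
by exists (As ++ As'), (Bs ++ Bs'); apply: (splitting_cat sS sSs).
Qed.

Lemma splitting_trans q T T' Ss Xs Ys As Bs :
  splitting q T Ss Xs Ys -> splitting q T' Ys As Bs ->
  splitting q (T `|` T') Ss (Xs ++ As) Bs.
Proof.
move=> [vX vY cX cY [e ne len]] [vA vB cA cB [e' ne' len']].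
split=> //; first exact: itvs_valid_cat.
- rewrite itvs_set_cat => x [xS [xT|xT']]; first by left; apply: cX.
  have [xT|nxT] := pselect (T x); first by left; apply: cX.
  by right; apply: cA; split => //; apply: cY.
- move=> x [xS /not_orP [nxT nxT']]; apply: cB; split => //; exact: cY.
- exists (e + e'); first exact: negligibleD.
  rewrite itvs_len_cat -addrA len' addrA len; ring.
Qed.

Lemma splitting_by_itvs q Ss Js : itvs_valid Ss -> itvs_valid Js ->
  exists As Bs, splitting q (itvs_set Js) Ss As Bs.
Proof.
elim: Js Ss => [|J Js IH] Ss vSs; [move=> _ | case/itvs_valid_cons => vJ vJs].
  exists [::], Ss; split=> //; rewrite ?itvs_set0 ?setI0 ?setD0 //.
  by exists 0; [apply: negligible0 | rewrite /itvs_len big_nil; ring].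
have [Xs [Ys sJ]] := splitting_by_itv q vJ vSs.
have [As [Bs sJs]] := IH Ys (let: And5 _ vY _ _ _ := sJ in vY) vJs.
by exists (Xs ++ As), Bs; rewrite itvs_set_cons; apply: splitting_trans sJ sJs.
Qed.

(** * Covers *)

Definition prepend (T : Type) (s : seq T) (u : nat -> T) : nat -> T :=
  foldr (fun t v n => if n is n'.+1 then v n' else t) u s.

Lemma itvs_len_mkseq (I : nat -> itv) N :
  itvs_len (mkseq I N) = LCpsum (fun n => itv_len (I n)) N.
Proof.
rewrite /itvs_len /mkseq big_map.
have -> : iota 0 N = index_iota 0 N by rewrite /index_iota subn0.
by rewrite big_mkord LCpsumE.
Qed.

Lemma itvs_valid_mkseq N (I : nat -> itv) :
  (forall n, itv_valid (I n)) -> itvs_valid (mkseq I N).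
Proof. by move=> vI _ /mapP [n _ ->]. Qed.

Lemma bigcup_itv_mkseq (I : nat -> itv) N :
  \bigcup_n itv_set (I n) `<=` itvs_set (mkseq I N) `|` \bigcup_n itv_set (I (N + n)%N).
Proof.
move=> x [n _ xn]; case: (ltnP n N) => nN.
  by left; exists (I n) => //; apply: map_f; rewrite mem_iota.
by right; exists (n - N)%N; rewrite ?subnKC.
Qed.

Lemma is_cover_sub X Y (I : nat -> itv) L :
  X `<=` Y -> is_cover Y I L -> is_cover X I L.
Proof. by move=> XY [vI [YI cI]]; split=> //; split=> //; apply: subset_trans YI. Qed.

Lemma is_cover_interleave X Y (I I' : nat -> itv) L L' :
  is_cover X I L -> is_cover Y I' L' -> is_cover (X `|` Y) (interleave I I') (L + L').
Proof.
move=> [vI [XI /LCconvP cI]] [vI' [YI' /LCconvP cI']].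
split; first by move=> n; rewrite /interleave; case: odd.
split.
  move=> x [/XI [n _ xn]|/YI' [n _ xn]]; [exists n.*2|exists n.*2.+1] => //;
  by rewrite /interleave /= odd_double ?doubleK ?uphalf_double.
apply/LCconvP; have := coef_conv_interleave cI cI'.
by congr (coef_conv (LCpsum _) _); apply/funext => n; rewrite /interleave; case: odd.
Qed.

Lemma is_cover_cons X S (I : nat -> itv) L : itv_valid S -> is_cover X I L ->
  is_cover (itv_set S `|` X) (fun n => if n is n'.+1 then I n' else S) (itv_len S + L).
Proof.
move=> vS [vI [XI /LCconvP cI]]; split; first by case.
split; last exact/LCconvP/coef_conv_psum_recl/cI/LC_itv_len.
by move=> x [xS|/XI [n _ xn]]; [exists 0%N|exists n.+1].
Qed.

Lemma is_cover_prepend X Ss (I : nat -> itv) L : itvs_valid Ss -> is_cover X I L ->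
  is_cover (itvs_set Ss `|` X) (prepend Ss I) (itvs_len Ss + L).
Proof.
elim: Ss => [_|S Ss IH /itvs_valid_cons [vS vSs]] cI.
  by rewrite itvs_set0 set0U /itvs_len big_nil add0r.
rewrite itvs_set_cons -setUA /itvs_len big_cons -addrA.
exact: is_cover_cons vS (IH vSs cI).
Qed.

Lemma is_cover_tail q X (I : nat -> itv) L : is_cover X I L -> exists N tI,
  [/\ is_cover (\bigcup_n itv_set (I (N + n)%N)) (fun n => I (N + n)%N) tI,
      negligible q tI & L = itvs_len (mkseq I N) + tI].
Proof.
move=> [vI [_ /LCconvP cI]]; have [HL conv] := cI; have [N HN] := conv q.
have Hlen n : LC (itv_len (I n)) by apply: LC_itv_len.
exists N, (L - LCpsum (fun n => itv_len (I n)) N); split.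
- split=> //; split=> //; apply/LCconvP.
  exact: coef_conv_psum_shift Hlen cI.
- split; first by apply: LCB => //; apply: LC_psum.
  by move=> p pq; rewrite !fctE /= HN // subrr.
- by rewrite itvs_len_mkseq addrC subrK.
Qed.

Lemma is_cover_summable (I : nat -> itv) : (forall n, itv_valid (I n)) ->
  LCconv (fun n => itv_len (I n)) 0 ->
  exists L, is_cover (\bigcup_n itv_set (I n)) I L.
Proof.
move=> vI /LCconvP cI0.
have [L cI] := coef_conv_series (fun n => LC_itv_len (vI n)) cI0.
by exists L; split=> //; split=> //; apply/LCconvP.
Qed.

Lemma add_outer_measure_le_cover (I S : nat -> itv) A B mA mB L :
  (forall n, itv_valid (I n)) -> LCconv (fun n => itv_len (I n)) 0 ->
  is_outer_measure A mA -> is_outer_measure B mB ->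
  A `<=` \bigcup_n itv_set (I n) -> B `<=` ~` (\bigcup_n itv_set (I n)) ->
  is_cover (A `|` B) S L -> LCle (mA + mB) L.
Proof.
move=> vI cI0 [/set_mem HmA [mA_le _]] [/set_mem HmB [mB_le _]] AI BI cS.
have [vS [coverS /LCconvP [HL _]]] := cS.
have [LI cI] := is_cover_summable vI cI0.
apply: LCle_approx (LCD HmA HmB) HL _ => q.
have [N [tI [ctI ntI _]]] := is_cover_tail q cI.
have [K [tS [ctS ntS ->]]] := is_cover_tail q cS.
have [As [Bs [vA vB cA cB [e ne len]]]] :=
  splitting_by_itvs q (itvs_valid_mkseq (N := K) vS) (itvs_valid_mkseq (N := N) vI).
have SI := @bigcup_itv_mkseq S K; have II := @bigcup_itv_mkseq I N.
have leA : LCle mA (itvs_len As + (tS + tI)).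
  apply: mA_le.
  exists (prepend As (interleave (fun n => S (K + n)%N) (fun n => I (N + n)%N))).
  apply: is_cover_sub (is_cover_prepend vA (is_cover_interleave ctS ctI)) => x Ax.
  have [xI|xtI] := II x (AI x Ax); last by right; right.
  have [xS|xtS] := SI x (coverS x (or_introl Ax)); last by right; left.
  by left; apply: cA; split.
have leB : LCle mB (itvs_len Bs + tS).
  apply: mB_le; exists (prepend Bs (fun n => S (K + n)%N)).
  apply: is_cover_sub (is_cover_prepend vB ctS) => x Bx.
  have [xS|xtS] := SI x (coverS x (or_intror Bx)); last by right.
  left; apply: cB; split=> // -[J /mapP [n _ ->] xJ].
  by apply: (BI x Bx); exists n.
exists (e + (tS + tI)); first by apply: negligibleD => //; apply: negligibleD.
apply: LCle_trans (LCleD leA leB) _; left.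
have -> : itvs_len (mkseq S K) = itvs_len As + itvs_len Bs - e by rewrite len addrK.
ring.
Qed.

Lemma outer_measure_approx X m q : is_outer_measure X m ->
  exists (S : nat -> itv) e, negligible q e /\ is_cover X S (m + e).
Proof.
move=> [/set_mem Hm [m_le m_glb]]; have Hmd := LCD Hm (LC_monomial q).
have [[L [[S cS] nle]]|/forallNP noL] :=
  pselect (exists L, cover_sums X L /\ ~ LCle (m + monomial q) L); last first.
  exfalso; apply: (LClt_geF (LClt_monomial m q)); apply: m_glb; first exact: mem_set.
  by move=> L cL; apply: contrapT => nle; apply: (noL L).
have [_ [_ /LCconvP [HL _]]] := cS.
exists S, (L - m); rewrite [m + _]addrC subrK; split=> //; split; first exact: LCB.
apply: agree_monomial_bound; rewrite LCltE.
  rewrite opprK; case: (m_le L (ex_intro _ S cS)) => [->|mL].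
    by rewrite subrr add0r; apply: LCpos_monomial.
  exact: LCposD mL (LCpos_monomial q).
case: (LClt_total HL Hmd) => [eL|Lmd|mdL]; [by case: nle; left|..|by case: nle; right].
by have -> : monomial q - (L - m) = m + monomial q - L by ring.
Qed.

Lemma cover_lb_le_add_outer_measure A B mA mB m :
  is_outer_measure A mA -> is_outer_measure B mB ->
  LC m -> (forall L, cover_sums (A `|` B) L -> LCle m L) -> LCle m (mA + mB).
Proof.
move=> hA hB Hm m_le; have [/set_mem HmA _] := hA; have [/set_mem HmB _] := hB.
apply: LCle_approx Hm (LCD HmA HmB) _ => q.
have [SA [eA [neA cA]]] := outer_measure_approx q hA.
have [SB [eB [neB cB]]] := outer_measure_approx q hB.
exists (eA + eB); first exact: negligibleD.
have -> : mA + mB + (eA + eB) = (mA + eA) + (mB + eB) by ring.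
by apply: m_le; exists (interleave SA SB); apply: is_cover_interleave.
Qed.

End LeviCivita.

Theorem proposition3p4 (R : realType) (I : nat -> lc_interval R)
  (A B : set (LCf R)) (mA mB : LCf R) :
  (forall n, itv_valid (I n)) ->
  (forall n m, n <> m -> itv_set (I n) `&` itv_set (I m) = set0) ->
  LCconv (fun n => itv_len (I n)) (@LCzero R) ->
  A `<=` @LC R -> B `<=` @LC R ->
  is_outer_measure A mA -> is_outer_measure B mB ->
  A `<=` \bigcup_n itv_set (I n) ->
  B `<=` ~` (\bigcup_n itv_set (I n)) ->
  outer_measurable (A `|` B) /\ is_outer_measure (A `|` B) (LCadd mA mB).
Proof.
move=> vI _ cI0 _ _ hA hB AI BI.
have [/set_mem HmA _] := hA; have [/set_mem HmB _] := hB.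
have hAB : is_outer_measure (A `|` B) (LCadd mA mB).
  split; first exact/mem_set/LCD.
  split=> [L [S cS]|m /set_mem Hm m_le].
    exact: add_outer_measure_le_cover vI cI0 hA hB AI BI cS.
  exact: cover_lb_le_add_outer_measure hA hB Hm m_le.
by split=> //; exists (LCadd mA mB).
Qed.
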